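(* Let $a>1$ be fixed. For each $w$ on the unit circle, let $D_w$ be the line $$ (a-w)z+w^3(wa-1)\overline{z}+2w^2a^2-3w(w^2+1)a+4w^2=0 $$ (the directrix of the parabola with focus $a$ tangent to the unit circle at $w$). As $w$ ranges over the unit circle, the envelope of the family of lines $\{D_w\}$ is given by the equation $$ z^2\overline{z}^2-2(a^2+2)z\overline{z}+4a(z+\overline{z})+a^4-4a^2=0. $$
   Context: The variable $z$ ranges over $\mathbb{C}\cong\mathbb{R}^2$ and $\overline{z}$ denotes its complex conjugate. The envelope of a one-parameter family of curves is the curve tangent to each member of the family. *)

From Stdlib Require Import Reals.
From Coquelicot Require Import Coquelicot.
Open Scope R_scope.

Definition ucirc (t : R) : C := (cos t, sin t).

Definition directrix_lhs (a : R) (w z : C) : C :=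
  ((RtoC a - w) * z + (w * w * w) * (w * RtoC a - 1) * Cconj z
   + 2 * (w * w) * RtoC (a ^ 2) - 3 * w * (w * w + 1) * RtoC a
   + 4 * (w * w))%C.

(* Envelope of a smooth one-parameter family of curves {z | G t z = 0}
   (t real parameter, G complex-valued, i.e. a pair of real equations):
   the set of points z such that for some parameter t, G t z = 0 and
   d/dt G t z = 0 (both real and imaginary parts). *)
Definition envelope (G : R -> C -> C) (z : C) : Prop :=
  exists t : R,
    G t z = 0%C /\
    is_derive (fun s => Re (G s z)) t 0 /\
    is_derive (fun s => Im (G s z)) t 0.

Definition envelope_lhs (a : R) (z : C) : C :=
  (z * z * Cconj z * Cconj z - 2 * RtoC (a ^ 2 + 2) * z * Cconj z
   + 4 * RtoC a * (z + Cconj z) + RtoC (a ^ 4 - 4 * a ^ 2))%C.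

(* On the unit circle [conj w = 1/w], so the directrix equation of D_w is
   [w^2 F_w(z) = 0] with [F_w(z)] real; hence the envelope of the D_w is the
   envelope of the real family [F_w = 0].  For fixed [w = e^{it}] the system
   [F_w(z) = d/dt F_w(z) = 0] is linear in [z], with determinant
   [2a^2 - 3a cos t + 1 > 0], and its solution is [z = 2w - a w^2].  Finally,
   [z = 2w - a w^2] with [|w| = 1] is equivalent to
   [(|z|^2 - a^2)^2 = 4 |z - a|^2], which is the envelope equation; conversely
   [w = (|z|^2 - a^2) / (2 (conj z - a))] recovers [w] from [z]. *)

From Stdlib Require Import Reals Lra Psatz.
From Coquelicot Require Import Coquelicot.
Open Scope R_scope.

Lemma sin_pow2 (t : R) : sin t ^ 2 = 1 - cos t ^ 2.
Proof. rewrite <- (sin2_cos2 t). unfold Rsqr. ring. Qed.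

Lemma ucirc_surjective (c s : R) : c ^ 2 + s ^ 2 = 1 -> exists t, ucirc t = (c, s).
Proof.
  intros H.
  assert (Hc : -1 <= c <= 1) by nra.
  assert (Hs : sqrt (1 - c²) = Rabs s).
  { rewrite <- sqrt_Rsqr_abs. f_equal. unfold Rsqr. nra. }
  unfold ucirc. destruct (Rle_or_lt 0 s) as [Hs0 | Hs0].
  - exists (acos c). rewrite cos_acos, sin_acos, Hs, Rabs_pos_eq by lra. reflexivity.
  - exists (- acos c). rewrite cos_neg, sin_neg, cos_acos, sin_acos, Hs, Rabs_left by lra.
    f_equal. ring.
Qed.

Lemma rotation_mul_eq0_iff (u v p : R) :
  u ^ 2 + v ^ 2 = 1 -> (u * p = 0 /\ v * p = 0 <-> p = 0).
Proof.
  intros H. split.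
  - intros [Hu Hv].
    assert (Hu2 : u ^ 2 = 1 - v ^ 2) by lra.
    replace p with (u * (u * p) + v * (v * p)) by ring [Hu2].
    rewrite Hu, Hv. ring.
  - intros ->. split; ring.
Qed.

Lemma linear_system_eq0 (p q r s u v : R) :
  p * s - q * r <> 0 -> p * u + q * v = 0 -> r * u + s * v = 0 -> u = 0 /\ v = 0.
Proof.
  intros Hdet H1 H2.
  assert (Hu : (p * s - q * r) * u = 0).
  { replace ((p * s - q * r) * u) with (s * (p * u + q * v) - q * (r * u + s * v)) by ring.
    rewrite H1, H2. ring. }
  assert (Hv : (p * s - q * r) * v = 0).
  { replace ((p * s - q * r) * v) with (p * (r * u + s * v) - r * (p * u + q * v)) by ring.
    rewrite H1, H2. ring. }
  apply Rmult_integral in Hu, Hv. tauto.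
Qed.

Lemma is_derive_ext_iff (f g : R -> R) (t l : R) :
  (forall s, f s = g s) -> (is_derive f t l <-> is_derive g t l).
Proof. intros E. split; apply is_derive_ext; congruence. Qed.

Lemma is_derive_eq0_iff (f : R -> R) (t l : R) :
  is_derive f t l -> (is_derive f t 0 <-> l = 0).
Proof.
  intros Hl. split.
  - intros H0. now rewrite <- (is_derive_unique _ _ _ Hl), (is_derive_unique _ _ _ H0).
  - now intros <-.
Qed.

Lemma envelope_rotated_iff (u v F : R -> R) (t du dv dF : R) :
  is_derive u t du -> is_derive v t dv -> is_derive F t dF -> u t ^ 2 + v t ^ 2 = 1 ->
  (u t * F t = 0 /\ v t * F t = 0 /\
   is_derive (fun s => u s * F s) t 0 /\ is_derive (fun s => v s * F s) t 0)
  <-> F t = 0 /\ dF = 0.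
Proof.
  intros Du Dv DF Huv.
  rewrite (is_derive_eq0_iff _ _ _ (is_derive_mult u F t du dF Du DF Rmult_comm)).
  rewrite (is_derive_eq0_iff _ _ _ (is_derive_mult v F t dv dF Dv DF Rmult_comm)).
  cbn. split.
  - intros [Hu [Hv [Hdu Hdv]]].
    assert (F0 : F t = 0) by now apply (rotation_mul_eq0_iff (u t) (v t)).
    rewrite F0, Rmult_0_r, Rplus_0_l in Hdu, Hdv.
    split; [exact F0 | now apply (rotation_mul_eq0_iff (u t) (v t))].
  - intros [-> ->]. repeat split; ring.
Qed.

(* [F_w(z)] for [w = e^{it}] and [z = x + i y]. *)
Definition directrix_real (a x y t : R) : R :=
  2 * (a * (x * cos (2 * t) + y * sin (2 * t)) - (x * cos t + y * sin t)
       + a ^ 2 + 2 - 3 * a * cos t).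

Definition directrix_real_deriv (a x y t : R) : R :=
  2 * (a * (- 2 * x * sin (2 * t) + 2 * y * cos (2 * t)) + x * sin t - y * cos t
       + 3 * a * sin t).

Lemma is_derive_directrix_real (a x y t : R) :
  is_derive (directrix_real a x y) t (directrix_real_deriv a x y t).
Proof. unfold directrix_real, directrix_real_deriv. auto_derive; [easy | ring]. Qed.

Lemma directrix_lhs_ucirc (a x y t : R) :
  directrix_lhs a (ucirc t) (x, y) =
  (cos (2 * t) * directrix_real a x y t, sin (2 * t) * directrix_real a x y t).
Proof.
  unfold directrix_lhs, directrix_real, ucirc, Cconj.
  rewrite cos_2a, sin_2a. unfold Cmult, Cplus, Cminus, Copp, RtoC. simpl.
  pose proof (sin_pow2 t) as Hs.
  f_equal; ring [Hs].
Qed.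

Lemma envelope_directrix_iff (a x y : R) :
  envelope (fun t z => directrix_lhs a (ucirc t) z) (x, y) <->
  exists t, directrix_real a x y t = 0 /\ directrix_real_deriv a x y t = 0.
Proof.
  assert (Ere : forall s,
    Re (directrix_lhs a (ucirc s) (x, y)) = cos (2 * s) * directrix_real a x y s)
    by (intros s; now rewrite directrix_lhs_ucirc).
  assert (Eim : forall s,
    Im (directrix_lhs a (ucirc s) (x, y)) = sin (2 * s) * directrix_real a x y s)
    by (intros s; now rewrite directrix_lhs_ucirc).
  assert (Rotated : forall t,
    directrix_lhs a (ucirc t) (x, y) = 0%C /\
    is_derive (fun s => Re (directrix_lhs a (ucirc s) (x, y))) t 0 /\
    is_derive (fun s => Im (directrix_lhs a (ucirc s) (x, y))) t 0 <->
    directrix_real a x y t = 0 /\ directrix_real_deriv a x y t = 0).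
  { intros t.
    rewrite directrix_lhs_ucirc, (is_derive_ext_iff _ _ _ _ Ere), (is_derive_ext_iff _ _ _ _ Eim).
    rewrite <- (envelope_rotated_iff (fun s => cos (2 * s)) (fun s => sin (2 * s)) _ t
                  (- 2 * sin (2 * t)) (2 * cos (2 * t))).
    - unfold RtoC. change C with (R * R)%type. rewrite pair_equal_spec. tauto.
    - auto_derive; [easy | ring].
    - auto_derive; [easy | ring].
    - apply is_derive_directrix_real.
    - rewrite <- (sin2_cos2 (2 * t)). unfold Rsqr. ring. }
  unfold envelope. split; intros [t Ht]; exists t; now apply Rotated.
Qed.

Definition envelope_point (a : R) (w : C) : C := (2 * w - RtoC a * (w * w))%C.

Lemma envelope_point_pair (a c s : R) :
  envelope_point a (c, s) = (2 * c - a * (c * c - s * s), 2 * s - 2 * a * c * s).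
Proof.
  unfold envelope_point, Cmult, Cminus, Cplus, Copp, RtoC. simpl. f_equal; ring.
Qed.

Lemma envelope_point_ucirc (a t : R) :
  envelope_point a (ucirc t) = (2 * cos t - a * cos (2 * t), 2 * sin t - a * sin (2 * t)).
Proof.
  unfold ucirc. rewrite envelope_point_pair, cos_2a, sin_2a. f_equal; ring.
Qed.

Lemma directrix_real_envelope_point (a t : R) :
  directrix_real a (2 * cos t - a * cos (2 * t)) (2 * sin t - a * sin (2 * t)) t = 0 /\
  directrix_real_deriv a (2 * cos t - a * cos (2 * t)) (2 * sin t - a * sin (2 * t)) t = 0.
Proof.
  unfold directrix_real, directrix_real_deriv. rewrite cos_2a, sin_2a.
  pose proof (sin_pow2 t) as Hs.
  split; ring [Hs].
Qed.

Lemma directrix_real_system_iff (a x y t : R) : 1 < a ->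
  (directrix_real a x y t = 0 /\ directrix_real_deriv a x y t = 0 <->
   (x, y) = envelope_point a (ucirc t)).
Proof.
  intros Ha.
  rewrite envelope_point_ucirc, pair_equal_spec.
  set (x0 := 2 * cos t - a * cos (2 * t)). set (y0 := 2 * sin t - a * sin (2 * t)).
  destruct (directrix_real_envelope_point a t) as [F0 F'0]. fold x0 y0 in F0, F'0.
  set (p := a * cos (2 * t) - cos t). set (q := a * sin (2 * t) - sin t).
  set (r := - 2 * a * sin (2 * t) + sin t). set (s := 2 * a * cos (2 * t) - cos t).
  assert (F_affine : directrix_real a x y t =
    directrix_real a x0 y0 t + 2 * (p * (x - x0) + q * (y - y0))).
  { unfold directrix_real, p, q. ring. }
  assert (F'_affine : directrix_real_deriv a x y t =
    directrix_real_deriv a x0 y0 t + 2 * (r * (x - x0) + s * (y - y0))).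
  { unfold directrix_real_deriv, r, s. ring. }
  assert (Hdet : p * s - q * r = 2 * a ^ 2 - 3 * a * cos t + 1).
  { unfold p, q, r, s. rewrite cos_2a, sin_2a.
    pose proof (sin_pow2 t) as Hs. ring [Hs]. }
  assert (Hdet_pos : 0 < p * s - q * r).
  { rewrite Hdet. pose proof (COS_bound t). nra. }
  split.
  - intros [F F'].
    rewrite F_affine, F0 in F. rewrite F'_affine, F'0 in F'.
    destruct (linear_system_eq0 p q r s (x - x0) (y - y0)); lra.
  - intros [-> ->]. split; assumption.
Qed.

Lemma envelope_lhs_pair (a x y : R) :
  envelope_lhs a (x, y) = ((x ^ 2 + y ^ 2 - a ^ 2) ^ 2 - 4 * ((x - a) ^ 2 + y ^ 2), 0).
Proof.
  unfold envelope_lhs, Cconj, Cmult, Cminus, Cplus, Copp, RtoC. simpl. f_equal; ring.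
Qed.

Lemma envelope_lhs_envelope_point (a t : R) :
  envelope_lhs a (envelope_point a (ucirc t)) = 0%C.
Proof.
  rewrite envelope_point_ucirc, envelope_lhs_pair, cos_2a, sin_2a.
  pose proof (sin_pow2 t) as Hs.
  unfold RtoC. f_equal. ring [Hs].
Qed.

Lemma envelope_point_of_quartic (a x y : R) : 1 <= a ->
  (x ^ 2 + y ^ 2 - a ^ 2) ^ 2 = 4 * ((x - a) ^ 2 + y ^ 2) ->
  exists c s, c ^ 2 + s ^ 2 = 1 /\ (x, y) = envelope_point a (c, s).
Proof.
  intros Ha Hq.
  set (m := (x - a) ^ 2 + y ^ 2) in Hq. set (N := x ^ 2 + y ^ 2 - a ^ 2) in Hq.
  destruct (Req_dec m 0) as [Hm | Hm].
  - (* [z = a], where the formula for [w] degenerates: take a root of [a w^2 - 2 w + a]. *)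
    assert (Hx : x = a) by (unfold m in Hm; nra).
    assert (Hy : y = 0) by (unfold m in Hm; nra).
    subst x y.
    set (r := sqrt (a ^ 2 - 1)).
    assert (Hr : r * r = a ^ 2 - 1) by (apply sqrt_sqrt; nra).
    exists (1 / a), (r / a). rewrite envelope_point_pair.
    replace (r / a * (r / a)) with ((a ^ 2 - 1) / a ^ 2) by (rewrite <- Hr; field; lra).
    replace ((r / a) ^ 2) with ((a ^ 2 - 1) / a ^ 2) by (rewrite <- Hr; field; lra).
    split; [| f_equal]; field; lra.
  - assert (Hm_pos : 0 < m) by (unfold m in *; nra).
    assert (Hprod : forall p q, N * p / (2 * m) * (N * q / (2 * m)) = p * q / m).
    { intros p q.
      replace (N * p / (2 * m) * (N * q / (2 * m))) with (N ^ 2 * (p * q) / (4 * m * m))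
        by (field; lra).
      rewrite Hq. field. lra. }
    set (c := N * (x - a) / (2 * m)). set (s := N * y / (2 * m)).
    exists c, s. rewrite envelope_point_pair.
    replace (c ^ 2 + s ^ 2) with (c * c + s * s) by ring.
    replace (2 * a * c * s) with (2 * a * (c * s)) by ring.
    unfold c, s. rewrite !Hprod.
    split; [| f_equal]; unfold m, N in *; field; lra.
Qed.

Lemma envelope_lhs_eq0_iff (a : R) (z : C) : 1 <= a ->
  envelope_lhs a z = 0%C <-> exists t, z = envelope_point a (ucirc t).
Proof.
  intros Ha. split.
  - destruct z as [x y]. rewrite envelope_lhs_pair. intros Hq.
    apply pair_equal_spec in Hq as [Hq _].
    destruct (envelope_point_of_quartic a x y Ha) as [c [s [Hcs ->]]]; [lra |].
    destruct (ucirc_surjective c s Hcs) as [t Ht].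
    exists t. now rewrite Ht.
  - intros [t ->]. apply envelope_lhs_envelope_point.
Qed.

Theorem proposition4p3 (a : R) (ha : 1 < a) (z : C) :
  envelope (fun t z => directrix_lhs a (ucirc t) z) z <->
  envelope_lhs a z = 0%C.
Proof.
  destruct z as [x y].
  rewrite envelope_directrix_iff, envelope_lhs_eq0_iff by lra.
  split; intros [t Ht]; exists t; now apply (directrix_real_system_iff a x y t ha).
Qed.
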